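(* Every nontrivial totally geodesic subset of $\mathbb{H}^2\times\mathbb{R}$ is either a horizontal plane $\mathbb{H}^2\times\{r\}$ for some $r\in\mathbb{R}$, or a vertical plane $\gamma\times\mathbb{R}$ for some geodesic $\gamma$ of $\mathbb{H}^2$.
   Context: $\mathbb{H}^2\times\mathbb{R}$ carries the Riemannian product metric. A geodesic is the image of a locally isometric immersion of the whole real line. A totally geodesic subset is a nonempty subset $X$ such that any two points of $X$ are joined by a geodesic contained in $X$; it is trivial if it is a single geodesic or the whole space, and nontrivial otherwise. *)

From Stdlib Require Import Reals.
Open Scope R_scope.

Definition arcosh (z : R) : R := ln (z + sqrt (z * z - 1)).

Record H2 : Type := mkH2 { hx : R; hy : R; hy_pos : 0 < hy }.

(* Hyperbolic distance (Riemannian distance of the metric (dx^2+dy^2)/y^2). *)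
Definition dH (p q : H2) : R :=
  arcosh (1 + ((hx p - hx q) ^ 2 + (hy p - hy q) ^ 2) / (2 * hy p * hy q)).

Definition H2R : Type := (H2 * R)%type.

Definition dH2R (p q : H2R) : R :=
  sqrt (dH (fst p) (fst q) ^ 2 + (snd p - snd q) ^ 2).

Definition locally_isometric {X : Type} (d : X -> X -> R) (c : R -> X) : Prop :=
  forall t : R, exists eps : R, 0 < eps /\
    forall s s' : R, Rabs (s - t) < eps -> Rabs (s' - t) < eps ->
      d (c s) (c s') = Rabs (s - s').

Definition is_geodesic {X : Type} (d : X -> X -> R) (G : X -> Prop) : Prop :=
  exists c : R -> X, locally_isometric d c /\
    forall x : X, G x <-> exists t : R, c t = x.

Definition totally_geodesic {X : Type} (d : X -> X -> R) (S : X -> Prop) : Prop :=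
  (exists x, S x) /\
  forall x y : X, S x -> S y ->
    exists G : X -> Prop, is_geodesic d G /\ G x /\ G y /\ (forall z, G z -> S z).

Definition nontrivial {X : Type} (d : X -> X -> R) (S : X -> Prop) : Prop :=
  ~ is_geodesic d S /\ ~ (forall x : X, S x).

(* Work in the hyperboloid model, where geodesics of H^2 are cut out by planes through the
   origin.  A locally isometric line in H^2 x R is, by connectedness of R, globally the product
   of a unit-speed H^2-geodesic with an affine line of R, so a totally geodesic S is closed
   under these product geodesics.  If S meets a vertical fibre twice it contains the whole
   fibre; spreading fibres along H^2-lines, S is then all of H^2 x R, the fibre itself, or
   (H^2-line) x R.  Otherwise S is the graph of a height function over its projection; if the
   projection is not contained in a line it is all of H^2, the height is affine along every
   H^2-geodesic, and comparing vertical lines with semicircles forces it to be constant. *)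

From Stdlib Require Import Reals Lra Psatz Classical ProofIrrelevance IndefiniteDescription.
Open Scope R_scope.

(** * Hyperbolic functions *)

Lemma cosh_sinh_sq x : cosh x * cosh x - sinh x * sinh x = 1.
Proof. unfold cosh, sinh. rewrite exp_Ropp. pose proof (exp_pos x). field. lra. Qed.

Lemma cosh_add a b : cosh (a + b) = cosh a * cosh b + sinh a * sinh b.
Proof.
  unfold cosh, sinh. rewrite Ropp_plus_distr, !exp_plus, !exp_Ropp.
  pose proof (exp_pos a). pose proof (exp_pos b). field. lra.
Qed.

Lemma cosh_opp a : cosh (- a) = cosh a.
Proof. unfold cosh. rewrite Ropp_involutive. lra. Qed.

Lemma sinh_opp a : sinh (- a) = - sinh a.
Proof. unfold sinh. rewrite Ropp_involutive. lra. Qed.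

Lemma cosh_sub a b : cosh (a - b) = cosh a * cosh b - sinh a * sinh b.
Proof. unfold Rminus. rewrite cosh_add, cosh_opp, sinh_opp. ring. Qed.

Lemma cosh_Rabs a : cosh (Rabs a) = cosh a.
Proof. destruct (Rcase_abs a); [rewrite Rabs_left, cosh_opp | rewrite Rabs_right]; lra. Qed.

Lemma sinh_pos x : 0 < x -> 0 < sinh x.
Proof. intro. rewrite <- sinh_0. now apply sinh_lt. Qed.

Lemma sinh_ge_0 x : 0 <= x -> 0 <= sinh x.
Proof. intros [Hx | <-]; [left; now apply sinh_pos | rewrite sinh_0; lra]. Qed.

Lemma cosh_ge_1 x : 1 <= cosh x.
Proof.
  pose proof (cosh_sinh_sq x).
  assert (0 < cosh x) by (unfold cosh; pose proof (exp_pos x); pose proof (exp_pos (- x)); lra).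
  nra.
Qed.

Lemma cosh_pos x : 0 < cosh x.
Proof. pose proof (cosh_ge_1 x). lra. Qed.

Lemma cosh_add_sinh x : cosh x + sinh x = exp x.
Proof. unfold cosh, sinh. field. Qed.

Lemma arcosh_cosh v : arcosh (cosh v) = Rabs v.
Proof.
  rewrite <- cosh_Rabs. unfold arcosh.
  replace (cosh (Rabs v) * cosh (Rabs v) - 1) with (sinh (Rabs v) * sinh (Rabs v))
    by (pose proof (cosh_sinh_sq (Rabs v)); lra).
  rewrite sqrt_square, cosh_add_sinh by (apply sinh_ge_0, Rabs_pos).
  apply ln_exp.
Qed.

Section Arcosh.
Variable z : R.
Hypothesis Hz : 1 <= z.

Let s := sqrt (z * z - 1).

Lemma exp_arcosh : exp (arcosh z) = z + s.
Proof. apply exp_ln. pose proof (sqrt_pos (z * z - 1)). unfold s. lra. Qed.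

Lemma exp_opp_arcosh : exp (- arcosh z) = z - s.
Proof.
  assert (Hs : s * s = z * z - 1) by (apply sqrt_sqrt; nra).
  assert (0 <= s) by apply sqrt_pos.
  rewrite exp_Ropp, exp_arcosh. field_simplify_eq; nra.
Qed.

Lemma cosh_arcosh : cosh (arcosh z) = z.
Proof. unfold cosh. rewrite exp_arcosh, exp_opp_arcosh. field. Qed.

Lemma arcosh_ge_0 : 0 <= arcosh z.
Proof. rewrite <- cosh_arcosh at 1. rewrite arcosh_cosh. apply Rabs_pos. Qed.

End Arcosh.

Lemma arcosh_le a b : 1 <= a -> a <= b -> arcosh a <= arcosh b.
Proof.
  intros Ha Hab. unfold arcosh.
  assert (sqrt (a * a - 1) <= sqrt (b * b - 1)) by (apply sqrt_le_1_alt; nra).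
  pose proof (sqrt_pos (a * a - 1)).
  destruct (Req_dec (a + sqrt (a * a - 1)) (b + sqrt (b * b - 1))) as [E | E].
  - rewrite E. lra.
  - left. apply ln_increasing; lra.
Qed.

Lemma cosh_arcsinh b : cosh (arcsinh b) = sqrt (b * b + 1).
Proof.
  pose proof (cosh_sinh_sq (arcsinh b)) as E. rewrite sinh_arcsinh in E.
  assert (1 <= cosh (arcsinh b)) by apply cosh_ge_1.
  rewrite <- (sqrt_square (cosh (arcsinh b))) by lra. f_equal. lra.
Qed.

(** * Minkowski space and the hyperboloid model *)

Record V3 : Type := mkV { c0 : R; c1 : R; c2 : R }.

Definition mink (u v : V3) : R := - c0 u * c0 v + c1 u * c1 v + c2 u * c2 v.

Definition det3 (u v w : V3) : R :=
  c0 u * (c1 v * c2 w - c2 v * c1 w) - c1 u * (c0 v * c2 w - c2 v * c0 w)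
  + c2 u * (c0 v * c1 w - c1 v * c0 w).

Definition vadd (u v : V3) : V3 := mkV (c0 u + c0 v) (c1 u + c1 v) (c2 u + c2 v).
Definition vscale (a : R) (u : V3) : V3 := mkV (a * c0 u) (a * c1 u) (a * c2 u).
Definition vcomb (a : R) (u : V3) (b : R) (v : V3) : V3 := vadd (vscale a u) (vscale b v).

Lemma V3_ext u v : c0 u = c0 v -> c1 u = c1 v -> c2 u = c2 v -> u = v.
Proof. destruct u, v; simpl; intros; subst; reflexivity. Qed.

Ltac V3_ring := apply V3_ext; unfold vcomb, vadd, vscale; simpl; ring.

Lemma mink_sym u v : mink u v = mink v u.
Proof. unfold mink; ring. Qed.

Lemma mink_combl a u b v w : mink (vcomb a u b v) w = a * mink u w + b * mink v w.
Proof. unfold mink, vcomb, vadd, vscale; simpl; ring. Qed.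

Lemma mink_combr a u b v w : mink w (vcomb a u b v) = a * mink w u + b * mink w v.
Proof. unfold mink, vcomb, vadd, vscale; simpl; ring. Qed.

Lemma mink_scalel a u w : mink (vscale a u) w = a * mink u w.
Proof. unfold mink, vscale; simpl; ring. Qed.

Lemma mink_scaler a u w : mink w (vscale a u) = a * mink w u.
Proof. unfold mink, vscale; simpl; ring. Qed.

Lemma det3_gram a b c :
  det3 a b c * det3 a b c =
  - (mink a a * mink b b * mink c c + 2 * mink a b * mink b c * mink a c
     - mink a a * mink b c * mink b c - mink b b * mink a c * mink a c
     - mink c c * mink a b * mink a b).
Proof. unfold det3, mink; ring. Qed.

Lemma det3_comb12 a b x1 y1 x2 y2 w :
  det3 (vcomb x1 a y1 b) (vcomb x2 a y2 b) w = (x1 * y2 - y1 * x2) * det3 a b w.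
Proof. unfold det3, vcomb, vadd, vscale; simpl; ring. Qed.

Lemma det3_comb3 a b x y : det3 a b (vcomb x a y b) = 0.
Proof. unfold det3, vcomb, vadd, vscale; simpl; ring. Qed.

Lemma det3_lin3 a b x c y d : det3 a b (vcomb x c y d) = x * det3 a b c + y * det3 a b d.
Proof. unfold det3, vcomb, vadd, vscale; simpl; ring. Qed.

Lemma det3_scale3 a b k c : det3 a b (vscale k c) = k * det3 a b c.
Proof. unfold det3, vscale; simpl; ring. Qed.

Lemma det3_rot a b c : det3 b c a = det3 a b c.
Proof. unfold det3; ring. Qed.

Lemma det3_swap12 a b c : det3 b a c = - det3 a b c.
Proof. unfold det3; ring. Qed.

Lemma det3_rep13 a b : det3 a b a = 0.
Proof. unfold det3; ring. Qed.

Lemma det3_rep23 a b : det3 a b b = 0.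
Proof. unfold det3; ring. Qed.

(* Cauchy-Schwarz in the spatial coordinates. *)
Lemma orth_timelike_null u w :
  mink u u < 0 -> mink w u = 0 -> mink w w = 0 -> w = mkV 0 0 0.
Proof.
  unfold mink. destruct u as [u0 u1 u2], w as [w0 w1 w2]; simpl. intros Hu Hwu Hww.
  assert (CS : (w1 * u1 + w2 * u2) * (w1 * u1 + w2 * u2)
               <= (w1 * w1 + w2 * w2) * (u1 * u1 + u2 * u2))
    by (pose proof (pow2_ge_0 (w1 * u2 - w2 * u1)); nra).
  replace (w1 * u1 + w2 * u2) with (w0 * u0) in CS by lra.
  replace (w1 * w1 + w2 * w2) with (w0 * w0) in CS by lra.
  assert (w0 * w0 <= 0) by nra.
  assert (w0 = 0) by nra. subst w0.
  assert (w1 = 0) by nra. assert (w2 = 0) by nra. subst. reflexivity.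
Qed.

Lemma unit_timelike_eq u v :
  mink u u = -1 -> mink v v = -1 -> mink u v = -1 -> u = v.
Proof.
  intros Hu Hv Huv.
  assert (Hw : vcomb 1 u (-1) v = mkV 0 0 0).
  { apply (orth_timelike_null u); [lra | |];
      rewrite ?mink_combl, ?mink_combr, (mink_sym v u); lra. }
  apply V3_ext; injection Hw; lra.
Qed.

Lemma timelike_same_cone v p :
  mink v v < 0 -> mink p p < 0 -> 0 < c0 p -> mink v p < 0 -> 0 < c0 v.
Proof.
  unfold mink. destruct v as [v0 v1 v2], p as [p0 p1 p2]; simpl. intros Hv Hp Hp0 Hvp.
  destruct (Rlt_dec 0 v0) as [| Hv0]; auto. exfalso.
  assert (CS : (v1 * p1 + v2 * p2) * (v1 * p1 + v2 * p2)
               <= (v1 * v1 + v2 * v2) * (p1 * p1 + p2 * p2))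
    by (pose proof (pow2_ge_0 (v1 * p2 - v2 * p1)); nra).
  assert (v0 * p0 <= 0) by nra.
  assert (0 <= v1 * v1 + v2 * v2) by nra. assert (0 <= p1 * p1 + p2 * p2) by nra.
  assert ((v1 * v1 + v2 * v2) * (p1 * p1 + p2 * p2) < (v0 * v0) * (p0 * p0)).
  { apply Rle_lt_trans with ((v1 * v1 + v2 * v2) * (p0 * p0)); nra. }
  nra.
Qed.

Lemma cramer a b c z : det3 a b c <> 0 ->
  z = vcomb (det3 z b c / det3 a b c) a 1
            (vcomb (det3 a z c / det3 a b c) b (det3 a b z / det3 a b c) c).
Proof.
  intro H. destruct a, b, c, z. unfold det3, vcomb, vadd, vscale in *; simpl in *.
  apply V3_ext; simpl; field; auto.
Qed.

(* The Gram identity forces the component of [q] orthogonal to the plane of [p], [u]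
   to be null, hence zero. *)
Lemma span_orthonormal p u q :
  mink p p = -1 -> mink u u = 1 -> mink p u = 0 -> det3 p u q = 0 ->
  q = vcomb (- mink q p) p (mink q u) u.
Proof.
  intros PP UU PU D.
  set (w := vcomb 1 q 1 (vcomb (mink q p) p (- mink q u) u)).
  assert (WP : mink w p = 0).
  { unfold w. rewrite !mink_combl, PP, (mink_sym u p), PU. ring. }
  assert (WU : mink w u = 0).
  { unfold w. rewrite !mink_combl, UU, PU. ring. }
  assert (WW : mink w w = 0).
  { pose proof (det3_gram p u w) as G.
    assert (DW : det3 p u w = 0) by (unfold w; rewrite det3_lin3, det3_comb3, D; ring).
    rewrite DW, PP, UU, PU, (mink_sym p w), WP, (mink_sym u w), WU in G. lra. }
  pose proof (orth_timelike_null p w ltac:(lra) WP WW) as W0.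
  unfold w, vcomb, vadd, vscale in W0. injection W0 as W0 W1 W2.
  apply V3_ext; unfold vcomb, vadd, vscale; simpl; lra.
Qed.

Lemma H2_ext p q : hx p = hx q -> hy p = hy q -> p = q.
Proof.
  destruct p as [a b Hb], q as [c d Hd]; simpl; intros; subst.
  f_equal. apply proof_irrelevance.
Qed.

(* The isometry of the upper half-plane onto the hyperboloid [mink v v = -1, c0 v > 0]. *)
Definition lift (p : H2) : V3 :=
  mkV ((hx p * hx p + hy p * hy p + 1) / (2 * hy p))
      ((hx p * hx p + hy p * hy p - 1) / (2 * hy p))
      (hx p / hy p).

Lemma mink_lift_self p : mink (lift p) (lift p) = -1.
Proof. unfold mink, lift; simpl. pose proof (hy_pos p). field. lra. Qed.

Lemma lift_future p : 0 < c0 (lift p).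
Proof. unfold lift; simpl. pose proof (hy_pos p). apply Rdiv_lt_0_compat; nra. Qed.

Lemma mink_lift p q :
  - mink (lift p) (lift q) = 1 + ((hx p - hx q) ^ 2 + (hy p - hy q) ^ 2) / (2 * hy p * hy q).
Proof.
  unfold mink, lift; simpl. pose proof (hy_pos p). pose proof (hy_pos q).
  field. split; lra.
Qed.

Lemma mink_lift_le p q : mink (lift p) (lift q) <= -1.
Proof.
  assert (0 <= ((hx p - hx q) ^ 2 + (hy p - hy q) ^ 2) / (2 * hy p * hy q)).
  { pose proof (hy_pos p). pose proof (hy_pos q).
    pose proof (pow2_ge_0 (hx p - hx q)). pose proof (pow2_ge_0 (hy p - hy q)).
    apply Rle_mult_inv_pos; [lra | apply Rmult_lt_0_compat; lra]. }
  pose proof (mink_lift p q). lra.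
Qed.

Lemma dH_lift p q : dH p q = arcosh (- mink (lift p) (lift q)).
Proof. now rewrite mink_lift. Qed.

Lemma mink_lift_dH p q : mink (lift p) (lift q) = - cosh (dH p q).
Proof. rewrite dH_lift, cosh_arcosh; [lra | pose proof (mink_lift_le p q); lra]. Qed.

(* [pt x y] is junk for [y <= 0], hence so is [unlift v] off the upper sheet of the hyperboloid. *)
Definition posify (y : R) : R := if Rlt_dec 0 y then y else 1.

Lemma posify_pos y : 0 < posify y.
Proof. unfold posify. destruct (Rlt_dec 0 y); lra. Qed.

Lemma posify_id y : 0 < y -> posify y = y.
Proof. unfold posify. destruct (Rlt_dec 0 y); lra. Qed.

Definition pt (x y : R) : H2 := mkH2 x (posify y) (posify_pos y).

Definition unlift (v : V3) : H2 := pt (c2 v / (c0 v - c1 v)) (/ (c0 v - c1 v)).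

Lemma unlift_lift p : unlift (lift p) = p.
Proof.
  pose proof (hy_pos p).
  assert (E : c0 (lift p) - c1 (lift p) = / hy p) by (unfold lift; simpl; field; lra).
  apply H2_ext; unfold unlift, pt; cbn [hx hy]; rewrite E.
  - unfold lift; simpl. field. lra.
  - rewrite Rinv_inv. now apply posify_id.
Qed.

Lemma lift_unlift v : mink v v = -1 -> 0 < c0 v -> lift (unlift v) = v.
Proof.
  destruct v as [a b c]. unfold mink, unlift, lift, pt; simpl. intros Hv Ha.
  assert (Hd : 0 < a - b) by nra.
  rewrite posify_id by (apply Rinv_0_lt_compat; lra).
  apply V3_ext; simpl; field_simplify_eq; try nra; lra.
Qed.

Lemma lift_inj p q : lift p = lift q -> p = q.
Proof. intro E. now rewrite <- (unlift_lift p), <- (unlift_lift q), E. Qed.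

Lemma dH_sym p q : dH p q = dH q p.
Proof. now rewrite !dH_lift, mink_sym. Qed.

Lemma dH_ge_0 p q : 0 <= dH p q.
Proof. rewrite dH_lift. apply arcosh_ge_0. pose proof (mink_lift_le p q). lra. Qed.

Lemma dH_self p : dH p p = 0.
Proof.
  rewrite dH_lift, mink_lift_self. replace (- -1) with (cosh 0) by (rewrite cosh_0; ring).
  rewrite arcosh_cosh. apply Rabs_R0.
Qed.

Lemma dH_eq_0 p q : dH p q = 0 -> p = q.
Proof.
  intro H. apply lift_inj, unit_timelike_eq; try apply mink_lift_self.
  now rewrite mink_lift_dH, H, cosh_0.
Qed.

Lemma dH_pos p q : p <> q -> 0 < dH p q.
Proof. intro H. destruct (dH_ge_0 p q) as [| E]; auto. now destruct H; apply dH_eq_0. Qed.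

(* [det3 ^ 2 >= 0] reads [(cosh (dH p r) - cosh a cosh b) ^ 2 <= (sinh a sinh b) ^ 2]. *)
Lemma dH_triangle p q r : dH p r <= dH p q + dH q r.
Proof.
  pose proof (dH_ge_0 p r). pose proof (dH_ge_0 p q). pose proof (dH_ge_0 q r).
  set (a := dH p q) in *. set (b := dH q r) in *.
  pose proof (det3_gram (lift p) (lift q) (lift r)) as G.
  rewrite !mink_lift_self, !mink_lift_dH in G. fold a b in G.
  set (g := cosh (dH p r)) in *.
  assert (Sa : sinh a * sinh a = cosh a * cosh a - 1) by (pose proof (cosh_sinh_sq a); lra).
  assert (Sb : sinh b * sinh b = cosh b * cosh b - 1) by (pose proof (cosh_sinh_sq b); lra).
  assert (Hsq : (g - cosh a * cosh b) * (g - cosh a * cosh b)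
                <= (sinh a * sinh b) * (sinh a * sinh b)).
  { replace (sinh a * sinh b * (sinh a * sinh b)) with ((sinh a * sinh a) * (sinh b * sinh b))
      by ring.
    rewrite Sa, Sb.
    pose proof (Rle_0_sqr (det3 (lift p) (lift q) (lift r))) as D. unfold Rsqr in D.
    enough (det3 (lift p) (lift q) (lift r) * det3 (lift p) (lift q) (lift r)
            = (cosh a * cosh a - 1) * (cosh b * cosh b - 1)
              - (g - cosh a * cosh b) * (g - cosh a * cosh b)) by lra.
    rewrite G. ring. }
  assert (Hg : g - cosh a * cosh b <= sinh a * sinh b).
  { pose proof (sinh_ge_0 a ltac:(lra)). pose proof (sinh_ge_0 b ltac:(lra)).
    assert (0 <= sinh a * sinh b) by (apply Rmult_le_pos; lra).
    nra. }
  rewrite <- (Rabs_right (dH p r)), <- (Rabs_right (a + b)), <- !arcosh_cosh by lra.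
  apply arcosh_le; [apply cosh_ge_1 | rewrite cosh_add; fold g; lra].
Qed.

(** * Lines and geodesics of H^2 *)

(* Gram-Schmidt: the unit tangent vector at lift p pointing towards lift r. *)
Definition hdir (p r : H2) : V3 :=
  vscale (/ sinh (dH p r)) (vcomb 1 (lift r) (- cosh (dH p r)) (lift p)).

Definition hpoint (p r : H2) (u : R) : V3 := vcomb (cosh u) (lift p) (sinh u) (hdir p r).

Definition hgeod (p r : H2) (u : R) : H2 := unlift (hpoint p r u).

Lemma hpoint_0 p r : hpoint p r 0 = lift p.
Proof. unfold hpoint. rewrite cosh_0, sinh_0. V3_ring. Qed.

Lemma hgeod_0 p r : hgeod p r 0 = p.
Proof. unfold hgeod. rewrite hpoint_0. apply unlift_lift. Qed.

Definition hcol (p r q : H2) : Prop := det3 (lift p) (lift r) (lift q) = 0.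

Section HyperbolicLine.
Variables p r : H2.
Hypothesis Hpr : p <> r.

Let Hd : 0 < dH p r := dH_pos p r Hpr.
Let Hs : 0 < sinh (dH p r) := sinh_pos _ Hd.

Lemma mink_lift_hdir : mink (lift p) (hdir p r) = 0.
Proof.
  unfold hdir. rewrite mink_scaler, mink_combr, mink_lift_self, mink_lift_dH. field. lra.
Qed.

Lemma mink_hdir_self : mink (hdir p r) (hdir p r) = 1.
Proof.
  pose proof (cosh_sinh_sq (dH p r)).
  unfold hdir. rewrite mink_scalel, mink_scaler, mink_combl, !mink_combr, !mink_lift_self.
  rewrite (mink_sym (lift r) (lift p)), mink_lift_dH.
  field_simplify_eq; [nra | lra].
Qed.

Lemma mink_hpoint u u' : mink (hpoint p r u) (hpoint p r u') = - cosh (u - u').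
Proof.
  unfold hpoint. rewrite mink_combl, !mink_combr, mink_lift_self, mink_hdir_self.
  rewrite (mink_sym (hdir p r) (lift p)), mink_lift_hdir, cosh_sub. ring.
Qed.

Lemma lift_hgeod u : lift (hgeod p r u) = hpoint p r u.
Proof.
  apply lift_unlift.
  - rewrite mink_hpoint, Rminus_diag, cosh_0. ring.
  - apply (timelike_same_cone _ (lift p)).
    + rewrite mink_hpoint, Rminus_diag, cosh_0. lra.
    + rewrite mink_lift_self. lra.
    + apply lift_future.
    + rewrite <- (hpoint_0 p r), mink_hpoint, Rminus_0_r. pose proof (cosh_ge_1 u). lra.
Qed.

Lemma dH_hgeod u u' : dH (hgeod p r u) (hgeod p r u') = Rabs (u - u').
Proof. rewrite dH_lift, !lift_hgeod, mink_hpoint, Ropp_involutive. apply arcosh_cosh. Qed.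

Lemma hpoint_dH : hpoint p r (dH p r) = lift r.
Proof.
  pose proof (hy_pos p). pose proof (hy_pos r).
  unfold hpoint, hdir. apply V3_ext; simpl; field; lra.
Qed.

(* The two distances determine the products of lift q with lift p and hdir p r, which give
   [mink (lift q) (hpoint p r u) = -1]. *)
Lemma eq_hgeod_of_dH q u :
  dH p q = Rabs u -> dH q r = Rabs (u - dH p r) -> q = hgeod p r u.
Proof.
  intros E1 E2.
  assert (QP : mink (lift q) (lift p) = - cosh u)
    by (rewrite mink_sym, mink_lift_dH, E1, cosh_Rabs; reflexivity).
  assert (QR : mink (lift q) (lift r) = - cosh (u - dH p r))
    by (rewrite mink_lift_dH, E2, cosh_Rabs; reflexivity).
  assert (QU : mink (lift q) (hdir p r) = sinh u).
  { unfold hdir. rewrite mink_scaler, mink_combr, QP, QR, cosh_sub. field. lra. }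
  apply lift_inj. rewrite lift_hgeod.
  apply unit_timelike_eq; [apply mink_lift_self | rewrite mink_hpoint, Rminus_diag, cosh_0; ring |].
  unfold hpoint. rewrite mink_combr, QP, QU. pose proof (cosh_sinh_sq u). lra.
Qed.

Lemma hcol_iff_hdir w : hcol p r w <-> det3 (lift p) (hdir p r) (lift w) = 0.
Proof.
  unfold hcol. rewrite <- hpoint_dH, <- (hpoint_0 p r) at 1. unfold hpoint.
  rewrite det3_comb12, cosh_0, sinh_0.
  split; intro E.
  - apply Rmult_integral in E as [E | E]; [lra | exact E].
  - rewrite E. ring.
Qed.

Lemma hcol_hgeod u : hcol p r (hgeod p r u).
Proof. apply hcol_iff_hdir. rewrite lift_hgeod. apply det3_comb3. Qed.

Lemma hgeod_of_hcol q : hcol p r q -> exists u, q = hgeod p r u.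
Proof.
  intro Hc. apply hcol_iff_hdir in Hc.
  pose proof (span_orthonormal _ _ _ (mink_lift_self p) mink_hdir_self mink_lift_hdir Hc) as E.
  set (m := mink (lift q) (lift p)) in E. set (b := mink (lift q) (hdir p r)) in E.
  assert (Hm : - m = sqrt (b * b + 1)).
  { assert (QQ : mink (lift q) (lift q) = - (m * m) + b * b).
    { rewrite E, mink_combl, !mink_combr.
      rewrite mink_lift_self, mink_hdir_self, (mink_sym (hdir p r)), mink_lift_hdir. ring. }
    assert (1 <= - m) by (pose proof (mink_lift_le q p); unfold m; lra).
    rewrite <- (sqrt_square (- m)) by lra. f_equal. rewrite mink_lift_self in QQ. lra. }
  exists (arcsinh b).
  apply lift_inj. rewrite lift_hgeod. unfold hpoint.
  now rewrite sinh_arcsinh, cosh_arcsinh, <- Hm.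
Qed.

Lemma hline_geodesic : is_geodesic dH (hcol p r).
Proof.
  exists (hgeod p r). split.
  - intro t. exists 1. split; [lra |]. intros. apply dH_hgeod.
  - intro q. split.
    + intro Hc. destruct (hgeod_of_hcol q Hc) as [u Hu]. now exists u.
    + intros [u <-]. apply hcol_hgeod.
Qed.

End HyperbolicLine.

Lemma isometric_eq_hgeod (sg : R -> H2) :
  (forall s s', dH (sg s) (sg s') = Rabs (s - s')) -> forall s, sg s = hgeod (sg 0) (sg 1) s.
Proof.
  intros Hiso s.
  assert (Hd : dH (sg 0) (sg 1) = 1) by (rewrite Hiso, Rabs_left; lra).
  assert (H01 : sg 0 <> sg 1) by (intro E; rewrite E, dH_self in Hd; lra).
  apply eq_hgeod_of_dH; auto; rewrite ?Hd, Hiso; [| reflexivity].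
  now rewrite Rminus_0_l, Rabs_Ropp.
Qed.

Definition line_closed (T : H2 -> Prop) : Prop :=
  forall p r q, T p -> T r -> p <> r -> hcol p r q -> T q.

Lemma eq_of_lift_scale z a k : lift z = vscale k (lift a) -> z = a.
Proof.
  intro E.
  assert (M : mink (lift z) (lift z) = k * k * mink (lift a) (lift a))
    by (rewrite E, mink_scalel, mink_scaler; ring).
  rewrite !mink_lift_self in M.
  assert (C : c0 (lift z) = k * c0 (lift a)) by now rewrite E.
  pose proof (lift_future z). pose proof (lift_future a).
  assert (k = 1) by nra. subst k.
  apply lift_inj. rewrite E. V3_ring.
Qed.

(* Points of the hyperbolic segment [b, c] are the normalised nonnegative combinations
   of lift b and lift c. *)
Lemma lift_nonneg_comb b c be ga : 0 <= be -> 0 <= ga -> 0 < be + ga ->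
  exists y k, 0 < k /\ vcomb be (lift b) ga (lift c) = vscale k (lift y).
Proof.
  intros Hb Hg Hbg. set (X := vcomb be (lift b) ga (lift c)).
  pose proof (mink_lift_le b c) as BC.
  assert (0 <= be * ga) by (apply Rmult_le_pos; lra).
  assert (XX : mink X X < 0).
  { unfold X. rewrite mink_combl, !mink_combr, !mink_lift_self, (mink_sym (lift c)).
    assert (be * ga * mink (lift b) (lift c) <= - (be * ga)) by nra.
    assert (0 < (be + ga) * (be + ga)) by nra. nra. }
  assert (XB : mink X (lift b) < 0).
  { unfold X. rewrite mink_combl, mink_lift_self, (mink_sym (lift c)).
    assert (ga * mink (lift b) (lift c) <= - ga) by nra. nra. }
  assert (X0 : 0 < c0 X).
  { apply (timelike_same_cone X (lift b)); auto;
      [rewrite mink_lift_self; lra | apply lift_future]. }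
  set (k := sqrt (- mink X X)).
  assert (Hk2 : k * k = - mink X X) by (apply sqrt_sqrt; lra).
  assert (Hk : 0 < k) by (apply sqrt_lt_R0; lra).
  clearbody k X.
  exists (unlift (vscale (/ k) X)), k. split; [exact Hk |].
  rewrite lift_unlift.
  - apply V3_ext; unfold vscale; simpl; field; lra.
  - rewrite mink_scalel, mink_scaler. field_simplify_eq; lra.
  - unfold vscale; simpl. apply Rmult_lt_0_compat; [apply Rinv_0_lt_compat |]; lra.
Qed.

Lemma lift_same_sign_comb b c be ga : 0 <= be * ga -> be + ga <> 0 ->
  exists y k, k <> 0 /\ vcomb be (lift b) ga (lift c) = vscale k (lift y).
Proof.
  intros Hbg Hs. destruct (Rlt_dec 0 (be + ga)).
  - destruct (lift_nonneg_comb b c be ga) as [y [k [Hk E]]]; try nra.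
    exists y, k. split; [lra | exact E].
  - destruct (lift_nonneg_comb b c (- be) (- ga)) as [y [k [Hk E]]]; try nra.
    exists y, (- k). split; [lra |].
    transitivity (vscale (-1) (vcomb (- be) (lift b) (- ga) (lift c))); [V3_ring |].
    rewrite E. V3_ring.
Qed.

(* z lies on the line through a and a point y of the segment [b, c]. *)
Lemma line_closed_vertex T a b c z al be ga :
  line_closed T -> T a -> T b -> T c -> det3 (lift a) (lift b) (lift c) <> 0 ->
  lift z = vcomb al (lift a) 1 (vcomb be (lift b) ga (lift c)) ->
  0 <= be * ga -> be + ga <> 0 -> T z.
Proof.
  intros HT Ta Tb Tc Hdet Ez Hbg Hs.
  destruct (lift_same_sign_comb b c be ga Hbg Hs) as [y [k [Hk Ey]]].
  rewrite Ey in Ez.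
  assert (Hbc : b <> c) by (intros <-; apply Hdet, det3_rep23).
  assert (Cy : hcol b c y).
  { unfold hcol. apply (Rmult_eq_reg_l k); [| exact Hk].
    rewrite <- det3_scale3, <- Ey, det3_comb3. ring. }
  assert (Hay : a <> y).
  { intros <-. apply Hdet. rewrite <- det3_rot.
    apply (Rmult_eq_reg_l k); [| exact Hk].
    rewrite <- det3_scale3, <- Ey, det3_comb3. ring. }
  apply (HT a y); auto; [apply (HT b c); auto |].
  unfold hcol. rewrite Ez, det3_lin3, det3_scale3, det3_rep13, det3_rep23. ring.
Qed.

(* Some two of the three barycentric coordinates of z have the same sign. *)
Lemma line_closed_full T a b c : line_closed T -> T a -> T b -> T c -> ~ hcol a b c ->
  forall z, T z.
Proof.
  intros HT Ta Tb Tc Hn z. unfold hcol in Hn.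
  pose proof (cramer (lift a) (lift b) (lift c) (lift z) Hn) as Ez.
  set (D := det3 (lift a) (lift b) (lift c)) in *.
  set (al := det3 (lift z) (lift b) (lift c) / D) in *.
  set (be := det3 (lift a) (lift z) (lift c) / D) in *.
  set (ga := det3 (lift a) (lift b) (lift z) / D) in *.
  destruct (Rle_dec 0 (be * ga)) as [Hbg | Hbg]; [destruct (Req_dec (be + ga) 0) as [Hs | Hs] |].
  - assert (Hb0 : be = 0) by nra. assert (Hg0 : ga = 0) by nra.
    replace z with a; [exact Ta |]. symmetry. apply (eq_of_lift_scale z a al).
    rewrite Ez, Hb0, Hg0. V3_ring.
  - now apply (line_closed_vertex T a b c z al be ga).
  - destruct (Rle_dec 0 (al * be)) as [Hab | Hab].
    + apply (line_closed_vertex T c a b z ga al be); auto.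
      * rewrite det3_rot, det3_rot. exact Hn.
      * rewrite Ez. V3_ring.
      * intro E. assert (be <> 0) by (intro; apply Hbg; nra). nra.
    + apply (line_closed_vertex T b a c z be al ga); auto.
      * rewrite det3_swap12. fold D. lra.
      * rewrite Ez. V3_ring.
      * assert (0 < (al * be) * (be * ga)) by nra. nra.
      * assert (0 < (al * be) * (be * ga)) by nra. nra.
Qed.

(** * Geodesics of H^2 x R *)

Definition hdist (x y : H2R) : R := dH (fst x) (fst y).
Definition vdist (x y : H2R) : R := Rabs (snd x - snd y).

Lemma dH2R_hv x y : dH2R x y = sqrt (hdist x y * hdist x y + vdist x y * vdist x y).
Proof.
  unfold dH2R, hdist, vdist. f_equal.
  rewrite <- Rabs_mult, Rabs_right by (apply Rle_ge, Rle_0_sqr). ring.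
Qed.

Lemma sum_sq_ge_0 a b : 0 <= a * a + b * b.
Proof. pose proof (Rle_0_sqr a). pose proof (Rle_0_sqr b). unfold Rsqr in *. lra. Qed.

Lemma dH2R_sq x y : dH2R x y * dH2R x y = hdist x y * hdist x y + vdist x y * vdist x y.
Proof. rewrite dH2R_hv. apply sqrt_sqrt, sum_sq_ge_0. Qed.

Lemma dH2R_ge_0 x y : 0 <= dH2R x y.
Proof. apply sqrt_pos. Qed.

Lemma dH2R_sym x y : dH2R x y = dH2R y x.
Proof. unfold dH2R. rewrite dH_sym. f_equal. ring. Qed.

Lemma dH2R_pos x y : x <> y -> 0 < dH2R x y.
Proof.
  intro Hxy. destruct (dH2R_ge_0 x y) as [| E]; auto. exfalso. apply Hxy.
  pose proof (dH2R_sq x y) as S. rewrite <- E in S.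
  pose proof (dH_ge_0 (fst x) (fst y)). pose proof (Rabs_pos (snd x - snd y)).
  unfold hdist, vdist in S.
  assert (dH (fst x) (fst y) = 0) by nra. assert (Rabs (snd x - snd y) = 0) by nra.
  destruct x as [p a], y as [q b]; simpl in *. f_equal.
  - now apply dH_eq_0.
  - destruct (Req_dec (a - b) 0) as [| Hn]; [lra | now apply Rabs_no_R0 in Hn].
Qed.

Lemma dH2R_vertical p a b : dH2R (p, a) (p, b) = Rabs (a - b).
Proof.
  rewrite dH2R_hv. unfold hdist, vdist; simpl. rewrite dH_self, Rmult_0_l, Rplus_0_l.
  rewrite <- Rabs_mult, Rabs_right by (apply Rle_ge, Rle_0_sqr). apply sqrt_Rsqr_abs.
Qed.

Lemma dH2R_horizontal p r h : dH2R (p, h) (r, h) = dH p r.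
Proof.
  unfold dH2R. cbn [fst snd]. rewrite Rminus_diag.
  replace (dH p r ^ 2 + 0 ^ 2) with (dH p r ^ 2) by ring.
  apply sqrt_pow2, dH_ge_0.
Qed.

Lemma dH2R_self x : dH2R x x = 0.
Proof. destruct x as [p a]. now rewrite dH2R_vertical, Rminus_diag, Rabs_R0. Qed.

(* Unit-speed parametrisation of the product of hgeod with a line of R.  When the base points
   agree, hgeod p p (junk away from 0) is only evaluated at 0. *)
Definition pgeod (x y : H2R) (t : R) : H2R :=
  (hgeod (fst x) (fst y) (t * dH (fst x) (fst y) / dH2R x y),
   snd x + t * (snd y - snd x) / dH2R x y).

Lemma pgeod_isometric x y t t' : 0 < dH2R x y ->
  dH2R (pgeod x y t) (pgeod x y t') = Rabs (t - t').
Proof.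
  intro HD. set (D := dH2R x y) in *. set (d := dH (fst x) (fst y)).
  assert (H1 : hdist (pgeod x y t) (pgeod x y t') = Rabs (t - t') * d / D).
  { unfold hdist, pgeod; simpl. fold D d.
    destruct (Req_dec d 0) as [E | E].
    - rewrite E, !Rmult_0_r, !Rdiv_0_l, hgeod_0, dH_self. lra.
    - assert (Hpr : fst x <> fst y) by (intro E'; apply E; unfold d; rewrite E'; apply dH_self).
      rewrite dH_hgeod by exact Hpr.
      replace (t * d / D - t' * d / D) with ((t - t') * (d / D)) by (field; lra).
      rewrite Rabs_mult, (Rabs_right (d / D)); [field; lra |].
      apply Rle_ge, Rle_mult_inv_pos; [apply dH_ge_0 | lra]. }
  assert (H2 : snd (pgeod x y t) - snd (pgeod x y t') = (t - t') * (snd y - snd x) / D)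
    by (unfold pgeod; simpl; fold D; field; lra).
  pose proof (dH2R_sq x y) as E. fold D in E. unfold hdist, vdist in E. fold d in E.
  rewrite <- Rabs_mult, Rabs_right in E by (apply Rle_ge, Rle_0_sqr).
  assert (U : Rabs (t - t') * Rabs (t - t') = (t - t') * (t - t'))
    by (rewrite <- Rabs_mult; apply Rabs_right, Rle_ge, Rle_0_sqr).
  unfold dH2R. fold (hdist (pgeod x y t) (pgeod x y t')). rewrite H1, H2.
  transitivity (sqrt (Rsqr (t - t'))); [f_equal; unfold Rsqr | apply sqrt_Rsqr_abs].
  replace ((Rabs (t - t') * d / D) ^ 2) with ((t - t') * (t - t') * (d * d) / (D * D))
    by (rewrite <- U; field; lra).
  replace ((t - t') * (t - t') * (d * d) / (D * D) + ((t - t') * (snd y - snd x) / D) ^ 2)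
    with ((t - t') * (t - t') * (d * d + (snd x - snd y) * (snd x - snd y)) / (D * D))
    by (field; lra).
  rewrite <- E. field. lra.
Qed.

(* Equality case of the triangle inequality for the l2-combination of two lengths. *)
Lemma l2_eq_add a1 a2 b1 b2 c1 c2 :
  0 <= a1 -> 0 <= a2 -> 0 <= b1 -> 0 <= b2 -> 0 <= c1 -> 0 <= c2 ->
  c1 <= a1 + b1 -> c2 <= a2 + b2 ->
  sqrt (c1 * c1 + c2 * c2) = sqrt (a1 * a1 + a2 * a2) + sqrt (b1 * b1 + b2 * b2) ->
  c1 = a1 + b1 /\ c2 = a2 + b2 /\
  sqrt (b1 * b1 + b2 * b2) * a1 = sqrt (a1 * a1 + a2 * a2) * b1 /\
  sqrt (b1 * b1 + b2 * b2) * a2 = sqrt (a1 * a1 + a2 * a2) * b2.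
Proof.
  intros Ha1 Ha2 Hb1 Hb2 Hc1 Hc2 L1 L2 E.
  set (al := sqrt (a1 * a1 + a2 * a2)) in *. set (be := sqrt (b1 * b1 + b2 * b2)) in *.
  assert (HA : al * al = a1 * a1 + a2 * a2) by apply sqrt_sqrt, sum_sq_ge_0.
  assert (HB : be * be = b1 * b1 + b2 * b2) by apply sqrt_sqrt, sum_sq_ge_0.
  assert (HC : (al + be) * (al + be) = c1 * c1 + c2 * c2)
    by (rewrite <- E; apply sqrt_sqrt, sum_sq_ge_0).
  assert (0 <= al) by apply sqrt_pos. assert (0 <= be) by apply sqrt_pos.
  assert (S1 : c1 * c1 <= (a1 + b1) * (a1 + b1)) by nra.
  assert (S2 : c2 * c2 <= (a2 + b2) * (a2 + b2)) by nra.
  assert (I1 : al * be <= a1 * b1 + a2 * b2) by nra.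
  assert (CS : (a1 * b1 + a2 * b2) * (a1 * b1 + a2 * b2) <= (al * be) * (al * be)).
  { replace ((al * be) * (al * be)) with ((al * al) * (be * be)) by ring. rewrite HA, HB.
    pose proof (Rle_0_sqr (a1 * b2 - a2 * b1)). unfold Rsqr in *. nra. }
  assert (Eq : a1 * b1 + a2 * b2 = al * be).
  { assert (0 <= al * be) by (apply Rmult_le_pos; auto). nra. }
  assert (Ec1 : c1 * c1 = (a1 + b1) * (a1 + b1)) by nra.
  assert (Ec2 : c2 * c2 = (a2 + b2) * (a2 + b2)) by nra.
  assert (Z : (be * a1 - al * b1) * (be * a1 - al * b1)
              + (be * a2 - al * b2) * (be * a2 - al * b2) = 0).
  { transitivity ((be * be) * (a1 * a1 + a2 * a2) + (al * al) * (b1 * b1 + b2 * b2)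
                  - 2 * (al * be) * (a1 * b1 + a2 * b2)); [ring |].
    rewrite <- HA, <- HB, Eq. ring. }
  pose proof (Rle_0_sqr (be * a1 - al * b1)). pose proof (Rle_0_sqr (be * a2 - al * b2)).
  unfold Rsqr in *.
  split; [nra | split; [nra | split; nra]].
Qed.

Lemma hdist_sym x y : hdist x y = hdist y x.
Proof. apply dH_sym. Qed.

Lemma vdist_sym x y : vdist x y = vdist y x.
Proof. apply Rabs_minus_sym. Qed.

Lemma between_proportional x y z : dH2R x z = dH2R x y + dH2R y z ->
  hdist x y * dH2R x z = dH2R x y * hdist x z /\ hdist y z * dH2R x z = dH2R y z * hdist x z /\
  vdist x y * dH2R x z = dH2R x y * vdist x z /\ vdist y z * dH2R x z = dH2R y z * vdist x z.
Proof.
  intro E. rewrite !dH2R_hv in *.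
  destruct (l2_eq_add (hdist x y) (vdist x y) (hdist y z) (vdist y z) (hdist x z) (vdist x z))
    as [A1 [A2 [A3 A4]]]; auto; try apply dH_ge_0; try apply Rabs_pos.
  - apply dH_triangle.
  - unfold vdist. replace (snd x - snd z) with ((snd x - snd y) + (snd y - snd z)) by ring.
    apply Rabs_triang.
  - rewrite E, A1, A2. nra.
Qed.

(* According to the sign of t, q lies between x and y, beyond y, or before x. *)
Lemma dists_ratio x y q t : 0 < dH2R x y -> dH2R x q = Rabs t ->
  dH2R q y = Rabs (t - dH2R x y) ->
  hdist x q * dH2R x y = Rabs t * hdist x y /\
  hdist q y * dH2R x y = Rabs (t - dH2R x y) * hdist x y /\
  vdist x q * dH2R x y = Rabs t * vdist x y /\
  vdist q y * dH2R x y = Rabs (t - dH2R x y) * vdist x y.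
Proof.
  intros HD E1 E2. set (D := dH2R x y) in *.
  destruct (Rle_dec 0 t) as [Ht | Ht]; [destruct (Rle_dec t D) as [Ht2 | Ht2] |].
  - rewrite Rabs_right in * by lra. rewrite Rabs_left1 in * by lra.
    destruct (between_proportional x q y) as [A1 [A2 [A3 A4]]]; [fold D; lra |].
    fold D in A1, A2, A3, A4. rewrite E1 in A1, A3. rewrite E2 in A2, A4.
    lra.
  - rewrite Rabs_right in * by lra. rewrite (Rabs_right (t - D)) in * by lra.
    rewrite (dH2R_sym q y) in E2.
    destruct (between_proportional x y q) as [A1 [A2 [A3 A4]]]; [fold D; lra |].
    fold D in A1, A2, A3, A4. rewrite E1 in A1, A2, A3, A4. rewrite E2 in A2, A4.
    rewrite (hdist_sym q y), (vdist_sym q y). nra.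
  - rewrite Rabs_left in * by lra. rewrite (Rabs_left (t - D)) in * by lra.
    rewrite (dH2R_sym x q) in E1.
    destruct (between_proportional q x y) as [A1 [A2 [A3 A4]]]; [fold D; lra |].
    fold D in A1, A2, A3, A4. rewrite E1, E2 in A1, A3. rewrite E2 in A2, A4.
    rewrite (hdist_sym x q), (vdist_sym x q). nra.
Qed.

Lemma Rabs_eq_sq a b : Rabs a = Rabs b -> a * a = b * b.
Proof.
  intro E. rewrite <- (Rabs_right (a * a)), <- (Rabs_right (b * b)), !Rabs_mult, E; auto;
    apply Rle_ge, Rle_0_sqr.
Qed.

Lemma eq_of_dists_R w s e : e <> 0 -> Rabs w = Rabs s -> Rabs (w - e) = Rabs (s - e) -> w = s.
Proof.
  intros He E1 E2. apply Rabs_eq_sq in E1. apply Rabs_eq_sq in E2.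
  apply (Rmult_eq_reg_r e); [nra | exact He].
Qed.

Lemma Rabs_div_pos a D : 0 < D -> Rabs (a / D) = Rabs a / D.
Proof. intro. unfold Rdiv. rewrite Rabs_mult, Rabs_inv, (Rabs_right D); lra. Qed.

Lemma eq_pgeod_of_dists x y q t : 0 < dH2R x y -> dH2R x q = Rabs t ->
  dH2R q y = Rabs (t - dH2R x y) -> q = pgeod x y t.
Proof.
  intros HD E1 E2. destruct (dists_ratio x y q t HD E1 E2) as [R1 [R2 [R3 R4]]].
  set (D := dH2R x y) in *. unfold hdist, vdist, pgeod in *. fold D.
  destruct x as [p a], y as [r b], q as [q h]; simpl in *. f_equal.
  - destruct (classic (p = r)) as [<- | Hpr].
    + rewrite dH_self, Rmult_0_r, Rdiv_0_l, hgeod_0. symmetry. apply dH_eq_0.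
      rewrite dH_self, Rmult_0_r in R1. nra.
    + pose proof (dH_pos p r Hpr). apply eq_hgeod_of_dH; [exact Hpr | |].
      * rewrite Rabs_div_pos, Rabs_mult, (Rabs_right (dH p r)) by lra.
        field_simplify_eq; lra.
      * replace (t * dH p r / D - dH p r) with ((t - D) * dH p r / D) by (field; lra).
        rewrite Rabs_div_pos, Rabs_mult, (Rabs_right (dH p r)) by lra.
        field_simplify_eq; lra.
  - destruct (Req_dec (b - a) 0) as [E | E].
    + rewrite E. rewrite (Rabs_minus_sym a b), E, Rabs_R0 in R3.
      destruct (Req_dec (a - h) 0) as [| Hn]; [lra | apply Rabs_no_R0 in Hn; nra].
    + enough (h - a = t * (b - a) / D) by lra.
      apply (eq_of_dists_R _ _ (b - a) E).
      * rewrite Rabs_minus_sym, Rabs_div_pos, Rabs_mult, (Rabs_minus_sym b a) by lra.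
        field_simplify_eq; lra.
      * replace (h - a - (b - a)) with (h - b) by ring.
        replace (t * (b - a) / D - (b - a)) with ((t - D) * (b - a) / D) by (field; lra).
        rewrite Rabs_div_pos, Rabs_mult, (Rabs_minus_sym b a) by lra.
        field_simplify_eq; lra.
Qed.

Lemma isometric_on_eq_pgeod (f : R -> H2R) (W : R -> Prop) a b s :
  (forall s s', W s -> W s' -> dH2R (f s) (f s') = Rabs (s - s')) ->
  W a -> W b -> W s -> a < b -> f s = pgeod (f a) (f b) (s - a).
Proof.
  intros Hiso Wa Wb Ws Hab.
  assert (HD : dH2R (f a) (f b) = b - a) by (rewrite Hiso, Rabs_left; auto; lra).
  apply eq_pgeod_of_dists; [lra | |].
  - rewrite Hiso, Rabs_minus_sym; auto.
  - rewrite Hiso, HD; auto. f_equal. ring.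
Qed.

Definition spreads_locally (P : R -> Prop) : Prop :=
  forall t, exists e, 0 < e /\ forall a b, Rabs (a - t) < e -> Rabs (b - t) < e -> a <> b ->
    P a -> P b -> forall s, Rabs (s - t) < e -> P s.

(* Connectedness of [0, +oo): the supremum of the initial segments on which P holds
   cannot be finite. *)
Lemma propagate_nonneg (P : R -> Prop) :
  (exists e, 0 < e /\ forall s, Rabs s < e -> P s) ->
  spreads_locally P ->
  forall s, 0 <= s -> P s.
Proof.
  intros [e0 [He0 H0]] Hst s0 Hs0.
  apply NNPP. intro Hn.
  set (E := fun T => 0 <= T /\ forall s, 0 <= s <= T -> P s).
  assert (Hb : bound E).
  { exists s0. intros T [HT HP]. destruct (Rle_dec T s0); auto. exfalso. apply Hn, HP. lra. }
  assert (He : E (e0 / 2)).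
  { split; [lra |]. intros s Hs. apply H0. rewrite Rabs_right; lra. }
  destruct (completeness E Hb (ex_intro _ _ He)) as [T [Hub Hlub]].
  assert (HT : e0 / 2 <= T) by (apply Hub; auto).
  destruct (Hst T) as [e [He1 Hw]].
  set (dl := Rmin (e / 2) (T / 2)).
  assert (0 < dl) by (unfold dl; apply Rmin_glb_lt; lra).
  assert (dl <= e / 2) by apply Rmin_l. assert (dl <= T / 2) by apply Rmin_r.
  assert (HT1 : exists T1, E T1 /\ T - dl < T1).
  { apply NNPP. intro K. assert (T <= T - dl); [| lra].
    apply Hlub. intros x Ex. destruct (Rle_dec x (T - dl)); auto.
    exfalso. apply K. exists x. split; auto. lra. }
  destruct HT1 as [T1 [[HT1a HT1b] HT1c]].
  assert (T1 <= T) by (apply Hub; split; auto).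
  assert (Pwin : forall s, Rabs (s - T) < e -> P s).
  { apply (Hw T1 (T1 - dl / 2)); try (apply HT1b; lra); try (rewrite Rabs_left1; lra); lra. }
  assert (E (T + e / 2)); [| assert (T + e / 2 <= T) by (apply Hub; auto); lra].
  split; [lra |]. intros s Hs. destruct (Rle_dec s T1); [apply HT1b; lra |].
  apply Pwin. destruct (Rle_dec s T); [rewrite Rabs_left1 | rewrite Rabs_right]; lra.
Qed.

Lemma propagate (P : R -> Prop) :
  (exists e, 0 < e /\ forall s, Rabs s < e -> P s) ->
  spreads_locally P ->
  forall s, P s.
Proof.
  intros H0 Hst s. destruct (Rle_dec 0 s); [now apply propagate_nonneg |].
  replace s with (- - s) by ring.
  apply (propagate_nonneg (fun s => P (- s))); [| | lra].
  - destruct H0 as [e [He H]]. exists e. split; auto. intros. apply H. now rewrite Rabs_Ropp.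
  - intro t. destruct (Hst (- t)) as [e [He H]]. exists e. split; auto.
    intros a b Ha Hb Hab Pa Pb s' Hs'.
    assert (N : forall u, Rabs (- u - - t) = Rabs (u - t))
      by (intro u; rewrite <- Rabs_Ropp; f_equal; ring).
    apply (H (- a) (- b)); rewrite ?N; auto. intro. apply Hab. lra.
Qed.

Lemma locally_isometric_pgeod (c : R -> H2R) : locally_isometric dH2R c ->
  exists x y, 0 < dH2R x y /\ forall s, c s = pgeod x y s.
Proof.
  intro Hc. destruct (Hc 0) as [e0 [He0 Hw0]].
  set (W0 := fun s => Rabs s < e0).
  assert (Hiso0 : forall s s', W0 s -> W0 s' -> dH2R (c s) (c s') = Rabs (s - s'))
    by (intros; apply Hw0; now rewrite Rminus_0_r).
  assert (W0h : W0 (e0 / 2)) by (unfold W0; rewrite Rabs_right; lra).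
  assert (W00 : W0 0) by (unfold W0; rewrite Rabs_R0; lra).
  exists (c 0), (c (e0 / 2)). split.
  { rewrite Hiso0, Rabs_left; auto; lra. }
  apply propagate.
  - exists (e0 / 2). split; [lra |]. intros s Hs.
    rewrite (isometric_on_eq_pgeod c W0 0 (e0 / 2) s), Rminus_0_r; auto; [| lra].
    unfold W0. lra.
  - intro t. destruct (Hc t) as [e [He Hw]]. exists e. split; auto.
    intros a b Ha Hb Hab Pa Pb s Hs.
    assert (GI : forall s s', True -> True ->
                 dH2R (pgeod (c 0) (c (e0 / 2)) s) (pgeod (c 0) (c (e0 / 2)) s') = Rabs (s - s'))
      by (intros; apply pgeod_isometric; rewrite Hiso0, Rabs_left; auto; lra).
    destruct (Rlt_dec a b) as [Hlt | Hge].
    + rewrite (isometric_on_eq_pgeod c (fun s => Rabs (s - t) < e) a b s),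
        (isometric_on_eq_pgeod _ (fun _ => True) a b s GI), Pa, Pb; auto.
    + rewrite (isometric_on_eq_pgeod c (fun s => Rabs (s - t) < e) b a s),
        (isometric_on_eq_pgeod _ (fun _ => True) b a s GI), Pa, Pb; auto; lra.
Qed.

Lemma geodesic_param G : is_geodesic dH2R G ->
  exists c : R -> H2R, (forall s s', dH2R (c s) (c s') = Rabs (s - s')) /\
    forall x, G x <-> exists t, c t = x.
Proof.
  intros [c [Hc Himg]]. exists c. split; auto.
  destruct (locally_isometric_pgeod c Hc) as [x [y [HD Hcg]]].
  intros. rewrite !Hcg. now apply pgeod_isometric.
Qed.

Lemma geodesic_pgeod G a b : is_geodesic dH2R G -> G a -> G b -> a <> b ->
  forall t, G (pgeod a b t).
Proof.
  intros HG Ga Gb Hab t. destruct (geodesic_param G HG) as [c [Hiso Himg]].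
  destruct (proj1 (Himg a) Ga) as [ta Ha], (proj1 (Himg b) Gb) as [tb Hb].
  rewrite <- Ha, <- Hb in *. apply Himg.
  destruct (Rlt_dec ta tb).
  - exists (ta + t). rewrite (isometric_on_eq_pgeod c (fun _ => True) ta tb (ta + t)); auto.
    f_equal. ring.
  - assert (ta <> tb) by (intro E; apply Hab; now rewrite E).
    set (f := fun s => c (- s)).
    assert (Hf : forall s s', True -> True -> dH2R (f s) (f s') = Rabs (s - s')).
    { intros. unfold f. rewrite Hiso, <- Rabs_Ropp. f_equal. ring. }
    exists (ta - t). replace (c (ta - t)) with (f (- ta + t)) by (unfold f; f_equal; ring).
    rewrite (isometric_on_eq_pgeod f (fun _ => True) (- ta) (- tb) (- ta + t)); auto; [| lra].
    unfold f. rewrite !Ropp_involutive. f_equal. ring.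
Qed.

Lemma geodesic_other_point G a : is_geodesic dH2R G -> G a -> exists b, G b /\ a <> b.
Proof.
  intros HG Ga. destruct (geodesic_param G HG) as [c [Hiso Himg]].
  destruct (proj1 (Himg a) Ga) as [ta Ha]. rewrite <- Ha.
  exists (c (ta + 1)). split; [apply Himg; eauto |].
  intro E. pose proof (Hiso ta (ta + 1)) as D. rewrite <- E, dH2R_self, Rabs_left in D; lra.
Qed.

Lemma pgeod_geodesic x y : 0 < dH2R x y ->
  is_geodesic dH2R (fun z => exists t, pgeod x y t = z).
Proof.
  intro HD. exists (pgeod x y). split; [| tauto].
  intro t. exists 1. split; [lra |]. intros. now apply pgeod_isometric.
Qed.

(** * Totally geodesic subsets *)

Lemma pgeod_same_base x y t : fst x = fst y ->
  pgeod x y t = (fst x, snd x + t * (snd y - snd x) / dH2R x y).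
Proof. intro E. unfold pgeod. now rewrite <- E, dH_self, Rmult_0_r, Rdiv_0_l, hgeod_0. Qed.

Section TotallyGeodesic.
Variable S : H2R -> Prop.
Hypothesis S_pgeod : forall a b, S a -> S b -> a <> b -> forall t, S (pgeod a b t).

Lemma S_fibre x y : S x -> S y -> x <> y -> fst x = fst y -> forall h, S (fst x, h).
Proof.
  intros Sx Sy Hxy Hf h.
  pose proof (dH2R_pos x y Hxy) as HD.
  assert (Hs : snd y - snd x <> 0).
  { intro E. apply Hxy. destruct x, y; simpl in *. f_equal; [auto | lra]. }
  replace (fst x, h) with (pgeod x y ((h - snd x) * dH2R x y / (snd y - snd x))).
  - now apply S_pgeod.
  - rewrite pgeod_same_base by exact Hf. f_equal. field. lra.
Qed.

Lemma S_base_line_closed : line_closed (fun q => exists h, S (q, h)).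
Proof.
  intros p r q [a Sp] [b Sr] Hpr Hc.
  assert (Hne : (p, a) <> (r, b)) by congruence.
  pose proof (dH_pos p r Hpr).
  destruct (hgeod_of_hcol p r Hpr q Hc) as [u ->].
  set (t := u * dH2R (p, a) (r, b) / dH p r).
  exists (snd (pgeod (p, a) (r, b) t)).
  replace (hgeod p r u) with (fst (pgeod (p, a) (r, b) t)).
  - rewrite <- surjective_pairing. now apply S_pgeod.
  - unfold pgeod, t; simpl. f_equal. field. split; [lra |].
    apply Rgt_not_eq, dH2R_pos, Hne.
Qed.

Section Fibre.
Variables (q : H2) (z : H2R).
Hypothesis S_fibre_q : forall h, S (q, h).
Hypothesis Sz : S z.
Hypothesis Hzq : fst z <> q.

Let p := fst z.
Let d := dH p q.
Let Hd : 0 < d := dH_pos p q Hzq.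

(* (hgeod p q v, h) lies on the geodesic from z to a suitable point of the fibre over q. *)
Lemma S_fibre_hgeod_nonzero v : v <> 0 -> forall h, S (hgeod p q v, h).
Proof.
  intros Hv h.
  set (x1 := (q, snd z + (h - snd z) * d / v)).
  assert (Hne : z <> x1) by (intro E; apply Hzq; now rewrite E).
  pose proof (dH2R_pos _ _ Hne) as HD.
  replace (hgeod p q v, h) with (pgeod z x1 (v * dH2R z x1 / d)).
  - apply S_pgeod; auto. apply S_fibre_q.
  - unfold pgeod; simpl. fold p d. f_equal.
    + f_equal. field. lra.
    + field. lra.
Qed.

(* The base point p itself is the midpoint of the points at parameters -1 and 1. *)
Lemma S_fibre_base h : S (p, h).
Proof.
  set (a := hgeod p q (-1)). set (b := hgeod p q 1).
  assert (Dab : dH a b = 2).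
  { unfold a, b. rewrite dH_hgeod by exact Hzq. rewrite Rabs_left; lra. }
  assert (Hab : a <> b) by (intro E; rewrite E, dH_self in Dab; lra).
  assert (Hp : p = hgeod a b 1).
  { assert (Da : dH a p = 1).
    { unfold a. rewrite <- (hgeod_0 p q) at 2. rewrite dH_hgeod by exact Hzq.
      rewrite Rabs_left; lra. }
    assert (Db : dH p b = 1).
    { unfold b. rewrite <- (hgeod_0 p q) at 1. rewrite dH_hgeod by exact Hzq.
      rewrite Rabs_left; lra. }
    apply eq_hgeod_of_dH; auto; rewrite ?Dab, ?Da, ?Db;
      [rewrite Rabs_right | rewrite Rabs_left]; lra. }
  replace (p, h) with (pgeod (a, h) (b, h) 1).
  - apply S_pgeod; try apply S_fibre_hgeod_nonzero; try lra. congruence.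
  - unfold pgeod; simpl. rewrite dH2R_horizontal, Dab, Hp. f_equal; [f_equal |]; field.
Qed.

Lemma S_fibre_line w : hcol p q w -> forall h, S (w, h).
Proof.
  intros Hc h. destruct (hgeod_of_hcol p q Hzq w Hc) as [v ->].
  destruct (Req_dec v 0) as [-> | Hv].
  - rewrite hgeod_0. apply S_fibre_base.
  - now apply S_fibre_hgeod_nonzero.
Qed.

End Fibre.

Lemma S_height_affine (hf : H2 -> R) (sg : R -> H2) :
  (forall q, S (q, hf q)) -> (forall q h, S (q, h) -> h = hf q) ->
  (forall s s', dH (sg s) (sg s') = Rabs (s - s')) ->
  forall s, hf (sg s) = hf (sg 0) + s * (hf (sg 1) - hf (sg 0)).
Proof.
  intros Hall Hgr Hiso s.
  set (x := (sg 0, hf (sg 0))). set (y := (sg 1, hf (sg 1))).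
  assert (Hd : dH (sg 0) (sg 1) = 1) by (rewrite Hiso, Rabs_left; lra).
  assert (Hne : x <> y) by (intro E; injection E; intros _ E1; rewrite E1, dH_self in Hd; lra).
  pose proof (dH2R_pos _ _ Hne) as HD.
  symmetry. apply Hgr.
  replace (sg s, hf (sg 0) + s * (hf (sg 1) - hf (sg 0))) with (pgeod x y (s * dH2R x y)).
  - apply S_pgeod; [apply Hall | apply Hall | exact Hne].
  - unfold pgeod; simpl. rewrite Hd, (isometric_eq_hgeod sg Hiso s).
    f_equal; [f_equal |]; field; lra.
Qed.

End TotallyGeodesic.

Lemma dH_pt x y x' y' : 0 < y -> 0 < y' ->
  dH (pt x y) (pt x' y') = arcosh (1 + ((x - x') ^ 2 + (y - y') ^ 2) / (2 * y * y')).
Proof. intros. unfold dH, pt; simpl. now rewrite !posify_id. Qed.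

Lemma pt_hx_hy p : pt (hx p) (hy p) = p.
Proof. apply H2_ext; simpl; [reflexivity | apply posify_id, hy_pos]. Qed.

Definition vertical (c s : R) : H2 := pt c (exp s).

Definition semicircle (c r s : R) : H2 := pt (c + r * tanh s) (r / cosh s).

Lemma vertical_isometric c s s' : dH (vertical c s) (vertical c s') = Rabs (s - s').
Proof.
  unfold vertical. rewrite dH_pt by apply exp_pos. rewrite <- arcosh_cosh. f_equal.
  unfold cosh, Rminus. rewrite Ropp_plus_distr, Ropp_involutive, !exp_plus, !exp_Ropp.
  pose proof (exp_pos s). pose proof (exp_pos s'). field. lra.
Qed.

Lemma semicircle_isometric c r s s' : 0 < r ->
  dH (semicircle c r s) (semicircle c r s') = Rabs (s - s').
Proof.
  intro Hr. pose proof (cosh_pos s). pose proof (cosh_pos s').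
  unfold semicircle. rewrite dH_pt by (apply Rdiv_lt_0_compat; lra).
  rewrite <- arcosh_cosh. f_equal.
  rewrite cosh_sub. unfold tanh.
  assert (Ss : sinh s ^ 2 = cosh s ^ 2 - 1) by (rewrite <- (cosh_sinh_sq s); ring).
  assert (Ss' : sinh s' ^ 2 = cosh s' ^ 2 - 1) by (rewrite <- (cosh_sinh_sq s'); ring).
  field_simplify_eq; [| repeat split; lra].
  rewrite Ss, Ss'. ring.
Qed.

Lemma semicircle_0 c r : semicircle c r 0 = pt c r.
Proof.
  unfold semicircle, tanh. rewrite sinh_0, cosh_0. f_equal; field.
Qed.

Lemma semicircle_through c r x y : 0 < y -> 0 < r -> x * x + y * y = r * r ->
  semicircle c r (ln ((r + x) / y)) = pt (c + x) y.
Proof.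
  intros Hy Hr E.
  assert (Hx : 0 < r + x) by nra.
  assert (Hq : 0 < (r + x) / y) by (apply Rdiv_lt_0_compat; lra).
  unfold semicircle, tanh, cosh, sinh. rewrite exp_Ropp, exp_ln by exact Hq.
  f_equal.
  - f_equal. field_simplify_eq; [nra | repeat split; nra].
  - field_simplify_eq; [nra | repeat split; nra].
Qed.

Section Height.
Variable S : H2R -> Prop.
Hypothesis S_pgeod : forall a b, S a -> S b -> a <> b -> forall t, S (pgeod a b t).
Variable hf : H2 -> R.
Hypothesis S_hf : forall q, S (q, hf q).
Hypothesis hf_S : forall q h, S (q, h) -> h = hf q.

Let vslope (c : R) : R := hf (pt c (exp 1)) - hf (pt c 1).
Let cslope (c r : R) : R := hf (semicircle c r 1) - hf (pt c r).

Lemma height_vertical c y : 0 < y -> hf (pt c y) = hf (pt c 1) + ln y * vslope c.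
Proof.
  intro Hy.
  pose proof (S_height_affine S S_pgeod hf (vertical c) S_hf hf_S (vertical_isometric c) (ln y))
    as H.
  unfold vertical in H. now rewrite exp_ln, exp_0 in H.
Qed.

Lemma height_semicircle c r x y : 0 < y -> 0 < r -> x * x + y * y = r * r ->
  hf (pt (c + x) y) = hf (pt c r) + ln ((r + x) / y) * cslope c r.
Proof.
  intros Hy Hr E.
  pose proof (S_height_affine S S_pgeod hf (semicircle c r) S_hf hf_S
    (fun s s' => semicircle_isometric c r s s' Hr) (ln ((r + x) / y))) as H.
  now rewrite semicircle_through, semicircle_0 in H.
Qed.

Lemma height_semicircle_sym c r x y : 0 < y -> 0 < r -> x * x + y * y = r * r ->
  hf (pt (c + x) y) + hf (pt (c - x) y) = 2 * hf (pt c r).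
Proof.
  intros Hy Hr E.
  rewrite (height_semicircle c r x y), Rminus_def, (height_semicircle c r (- x) y) by (auto; nra).
  assert (Hx : 0 < r + x) by nra. assert (Hx' : 0 < r - x) by nra.
  assert (L : ln ((r + x) / y) + ln ((r + - x) / y) = 0).
  { rewrite <- ln_mult by (apply Rdiv_lt_0_compat; lra).
    replace ((r + x) / y * ((r + - x) / y)) with 1 by (field_simplify_eq; nra).
    apply ln_1. }
  replace (ln ((r + - x) / y)) with (- ln ((r + x) / y)) by lra. ring.
Qed.

(* From the semicircles centred at c through (c +- 1, y) and (c +- 1, 1/y); only the
   coefficient ln (r1 r2) depends on y. *)
Lemma height_vertical_slope_identity c y r1 r2 : 0 < y -> 0 < r1 -> 0 < r2 ->
  1 + y * y = r1 * r1 -> 1 + / y * / y = r2 * r2 ->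
  hf (pt (c + 1) 1) + hf (pt (c - 1) 1) - 2 * hf (pt c 1) = ln (r1 * r2) * vslope c.
Proof.
  intros Hy H1 H2 E1 E2.
  pose proof (height_semicircle_sym c r1 1 y Hy H1 ltac:(lra)) as S1.
  pose proof (height_semicircle_sym c r2 1 (/ y) ltac:(now apply Rinv_0_lt_compat) H2 ltac:(lra))
    as S2.
  assert (Hy' : 0 < / y) by now apply Rinv_0_lt_compat.
  rewrite (height_vertical (c + 1) y), (height_vertical (c - 1) y), (height_vertical c r1) in S1
    by lra.
  rewrite (height_vertical (c + 1) (/ y)), (height_vertical (c - 1) (/ y)),
    (height_vertical c r2), ln_Rinv in S2 by lra.
  rewrite ln_mult by auto. lra.
Qed.

(* y = 4/3 and y = 12/5 have rational radii and give the coefficients ln (25/12) <> ln (169/60). *)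
Lemma height_vertical_const c y : 0 < y -> hf (pt c y) = hf (pt c 1).
Proof.
  intro Hy. rewrite height_vertical by exact Hy.
  pose proof (height_vertical_slope_identity c (4/3) (5/3) (5/4)) as A.
  pose proof (height_vertical_slope_identity c (12/5) (13/5) (13/12)) as B.
  assert (ln (5/3 * (5/4)) <> ln (13/5 * (13/12))) by (intro E; apply ln_inv in E; lra).
  assert (Hc : vslope c = 0).
  { apply (Rmult_eq_reg_l (ln (5/3 * (5/4)) - ln (13/5 * (13/12)))); [| lra].
    rewrite Rmult_0_r, Rmult_minus_distr_r, <- A, <- B; try lra; field. }
  rewrite Hc. ring.
Qed.

Lemma height_horizontal x r y : 0 < y -> 0 < r -> x * x + y * y = r * r ->
  hf (pt x 1) = hf (pt 0 1) + ln ((r + x) / y) * cslope 0 r.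
Proof.
  intros Hy Hr E.
  pose proof (height_semicircle 0 r x y Hy Hr E) as H. rewrite Rplus_0_l in H.
  now rewrite <- (height_vertical_const x y Hy), <- (height_vertical_const 0 r Hr).
Qed.

(* The triples (204, 272, 340), (204, 253, 325), (300, 160, 340), (300, 125, 325) give two
   points on two semicircles centred at 0, and ln 2 ln 5 <> ln 4 ln (23/11). *)
Lemma semicircle_slope_0 r : 0 < r -> cslope 0 r = 0.
Proof.
  intro Hr. set (k := r / 325). assert (Hk : 0 < k) by (unfold k; lra).
  replace r with (325 * k) in * by (unfold k; field).
  pose proof (height_horizontal (204 * k) (340 * k) (272 * k)) as A1.
  pose proof (height_horizontal (204 * k) (325 * k) (253 * k)) as A2.
  pose proof (height_horizontal (300 * k) (340 * k) (160 * k)) as A3.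
  pose proof (height_horizontal (300 * k) (325 * k) (125 * k)) as A4.
  replace ((340 * k + 204 * k) / (272 * k)) with 2 in A1 by (field; lra).
  replace ((325 * k + 204 * k) / (253 * k)) with (23 / 11) in A2 by (field; lra).
  replace ((340 * k + 300 * k) / (160 * k)) with (2 * 2) in A3 by (field; lra).
  replace ((325 * k + 300 * k) / (125 * k)) with 5 in A4 by (field; lra).
  rewrite ln_mult in A3 by lra.
  assert (L : 2 * ln (23 / 11) <> ln 5).
  { rewrite <- Rplus_diag, <- ln_mult by lra. intro E. apply ln_inv in E; lra. }
  apply (Rmult_eq_reg_l (2 * ln (23 / 11) - ln 5)); [| lra].
  rewrite Rmult_0_r. nra.
Qed.

Lemma height_const q : hf q = hf (pt 0 1).
Proof.
  rewrite <- (pt_hx_hy q), height_vertical_const by apply hy_pos.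
  set (x := hx q). set (r := Rabs x + 1).
  assert (Hr : 0 < r) by (unfold r; pose proof (Rabs_pos x); lra).
  assert (Hy2 : 0 < r * r - x * x).
  { assert (Rabs x * Rabs x = x * x) by (rewrite <- Rabs_mult; apply Rabs_right; nra).
    pose proof (Rabs_pos x). unfold r. nra. }
  rewrite (height_horizontal x r (sqrt (r * r - x * x))), semicircle_slope_0 by
    (try apply sqrt_lt_R0; try rewrite sqrt_sqrt; lra).
  ring.
Qed.

End Height.

Lemma is_geodesic_ext {X : Type} (d : X -> X -> R) (G G' : X -> Prop) :
  (forall x, G x <-> G' x) -> is_geodesic d G -> is_geodesic d G'.
Proof.
  intros E [c [Hc Himg]]. exists c. split; [exact Hc |]. intro x. rewrite <- E. apply Himg.
Qed.

Lemma fibre_geodesic q : is_geodesic dH2R (fun x => fst x = q).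
Proof.
  exists (fun t => (q, t)). split.
  - intro t. exists 1. split; [lra |]. intros. apply dH2R_vertical.
  - intros [w k]. simpl. split; [intros -> | intros [t E]; now injection E]. now exists k.
Qed.

Definition base_collinear (S : H2R -> Prop) : Prop :=
  forall a b c, S a -> S b -> S c -> hcol (fst a) (fst b) (fst c).

Definition is_graph (S : H2R -> Prop) : Prop :=
  forall q h h', S (q, h) -> S (q, h') -> h = h'.

Section Classification.
Variable S : H2R -> Prop.
Hypothesis S_pgeod : forall a b, S a -> S b -> a <> b -> forall t, S (pgeod a b t).

Lemma S_base_full : ~ base_collinear S -> forall w, exists h, S (w, h).
Proof.
  intros Hn. unfold base_collinear in Hn.
  apply not_all_ex_not in Hn as [a Hn]. apply not_all_ex_not in Hn as [b Hn].
  apply not_all_ex_not in Hn as [c Hn].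
  apply imply_to_and in Hn as [Sa Hn]. apply imply_to_and in Hn as [Sb Hn].
  apply imply_to_and in Hn as [Sc Hn].
  apply (line_closed_full _ (fst a) (fst b) (fst c) (S_base_line_closed S S_pgeod)); auto;
    [exists (snd a) | exists (snd b) | exists (snd c)]; now rewrite <- surjective_pairing.
Qed.

Lemma S_fibre_of_not_graph : ~ is_graph S -> exists q, forall h, S (q, h).
Proof.
  intro Hn. unfold is_graph in Hn.
  apply not_all_ex_not in Hn as [q Hn]. apply not_all_ex_not in Hn as [h Hn].
  apply not_all_ex_not in Hn as [h' Hn].
  apply imply_to_and in Hn as [Sh Hn]. apply imply_to_and in Hn as [Sh' Hn].
  exists q. apply (S_fibre S S_pgeod (q, h) (q, h')); auto. congruence.
Qed.

Section WithFibre.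
Variable q : H2.
Hypothesis S_fibre_q : forall h, S (q, h).

Lemma S_full_of_fibre : (forall w, exists h, S (w, h)) -> forall x, S x.
Proof.
  intros Hbase [w k]. destruct (classic (w = q)) as [-> | Hwq]; [apply S_fibre_q |].
  destruct (Hbase w) as [kw Sw].
  apply (S_fibre_line S S_pgeod q (w, kw)); auto. apply det3_rep13.
Qed.

Lemma S_vertical_plane z : base_collinear S -> S z -> fst z <> q ->
  forall x, S x <-> hcol (fst z) q (fst x).
Proof.
  intros Hcol Sz Hzq [w k]. split.
  - intro Sx. apply (Hcol z (q, 0) (w, k)); auto.
  - intro Hc. now apply (S_fibre_line S S_pgeod q z).
Qed.

Lemma S_classification_fibre :
  (forall x, S x) \/ is_geodesic dH2R S \/
  exists g, is_geodesic dH g /\ forall x, S x <-> g (fst x).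
Proof.
  destruct (classic (base_collinear S)) as [Hcol | Hn].
  - destruct (classic (exists z, S z /\ fst z <> q)) as [[z [Sz Hzq]] | Hnz].
    + right; right. exists (hcol (fst z) q). split.
      * now apply hline_geodesic.
      * now apply S_vertical_plane.
    + right; left. apply (is_geodesic_ext _ (fun x => fst x = q)); [| apply fibre_geodesic].
      intros [w k]. simpl. split; [intros <-; apply S_fibre_q |].
      intro Sx. apply NNPP. intro. apply Hnz. now exists (w, k).
  - left. apply S_full_of_fibre, S_base_full, Hn.
Qed.

End WithFibre.

Lemma S_graph_line_geodesic x y : is_graph S -> base_collinear S -> S x -> S y -> x <> y ->
  is_geodesic dH2R S.
Proof.
  intros Hgr Hcol Sx Sy Hxy.
  assert (Hpr : fst x <> fst y).
  { intro E. apply Hxy. destruct x as [p a], y as [r b]. simpl in E. subst r.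
    f_equal. now apply (Hgr p). }
  pose proof (dH_pos _ _ Hpr). pose proof (dH2R_pos _ _ Hxy).
  destruct (pgeod_geodesic x y ltac:(assumption)) as [c [Hc Himg]].
  exists c. split; [exact Hc |]. intro w. rewrite <- Himg. split.
  - intro Sw. destruct (hgeod_of_hcol _ _ Hpr (fst w) (Hcol x y w Sx Sy Sw)) as [u Hu].
    set (t := u * dH2R x y / dH (fst x) (fst y)).
    assert (F : fst (pgeod x y t) = fst w)
      by (unfold pgeod, t; simpl; rewrite Hu; f_equal; field; lra).
    exists t. rewrite (surjective_pairing (pgeod x y t)), (surjective_pairing w), F.
    f_equal. apply (Hgr (fst w)); [rewrite <- F, <- surjective_pairing; now apply S_pgeod |].
    now rewrite <- surjective_pairing.
  - intros [t <-]. now apply S_pgeod.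
Qed.

Lemma S_horizontal_plane : is_graph S -> (forall w, exists h, S (w, h)) ->
  exists r, forall x, S x <-> snd x = r.
Proof.
  intros Hgr Hbase. destruct (functional_choice _ Hbase) as [hf S_hf].
  assert (hf_S : forall w k, S (w, k) -> k = hf w)
    by (intros w k Sw; exact (Hgr _ _ _ Sw (S_hf w))).
  exists (hf (pt 0 1)). intros [w k]. simpl.
  rewrite <- (height_const S S_pgeod hf S_hf hf_S w). split.
  - apply hf_S.
  - intros ->. apply S_hf.
Qed.

End Classification.

Lemma totally_geodesic_pgeod S : totally_geodesic dH2R S ->
  forall a b, S a -> S b -> a <> b -> forall t, S (pgeod a b t).
Proof.
  intros [_ Htg] a b Sa Sb Hab t.
  destruct (Htg a b Sa Sb) as [G [HG [Ga [Gb HGS]]]].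
  apply HGS. now apply (geodesic_pgeod G a b).
Qed.

Lemma totally_geodesic_two_points S : totally_geodesic dH2R S ->
  exists a b, S a /\ S b /\ a <> b.
Proof.
  intros [[a Sa] Htg]. destruct (Htg a a Sa Sa) as [G [HG [Ga [_ HGS]]]].
  destruct (geodesic_other_point G a HG Ga) as [b [Gb Hab]].
  exists a, b. auto.
Qed.

Theorem mainTheorem3 (S : H2R -> Prop) :
  totally_geodesic dH2R S -> nontrivial dH2R S ->
  (exists r : R, forall p : H2R, S p <-> snd p = r) \/
  (exists g : H2 -> Prop, is_geodesic dH g /\
     forall p : H2R, S p <-> g (fst p)).
Proof.
  intros Htg [Hng Hnall].
  pose proof (totally_geodesic_pgeod S Htg) as S_pgeod.
  destruct (classic (is_graph S)) as [Hgr | Hngr].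
  - left. apply (S_horizontal_plane S S_pgeod Hgr), (S_base_full S S_pgeod).
    intro Hcol. apply Hng. destruct (totally_geodesic_two_points S Htg) as [a [b [Sa [Sb Hab]]]].
    now apply (S_graph_line_geodesic S S_pgeod a b).
  - destruct (S_fibre_of_not_graph S S_pgeod Hngr) as [q Hq].
    destruct (S_classification_fibre S S_pgeod q Hq) as [Hall | [HG | Hv]]; tauto.
Qed.
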